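(* Let $X$ be a real reflexive Banach space and $\varepsilon\in[0,2)$. Then a functional $f\in X^*\setminus\{\theta\}$ is $\varepsilon$-smooth (as an element of the normed space $X^*$) if and only if $\operatorname{diam} M_f^+\le\varepsilon$, where $M_f^+=\{x\in S_X: f(x)=\|f\|\}$.
   Context: For a normed space $Z$ and $z\in Z\setminus\{\theta\}$, $J(z)=\{\phi\in S_{Z^*}:\phi(z)=\|z\|\}$, and $z$ is called $\varepsilon$-smooth if $\operatorname{diam}J(z)\le\varepsilon$, where $\operatorname{diam}A=\sup_{a,b\in A}\|a-b\|$. Here this is applied with $Z=X^*$, so $J(f)\subset S_{X^{**}}$. $S_X$ denotes the unit sphere of $X$. *)

From HB Require Import structures.
From mathcomp Require Import all_boot all_order all_algebra.
From mathcomp Require Import all_classical all_reals all_analysis.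
Set Implicit Arguments. Unset Strict Implicit. Unset Printing Implicit Defensive.
Import Order.TTheory GRing.Theory Num.Theory.
Import numFieldNormedType.Exports.
Local Open Scope classical_set_scope.
Local Open Scope ring_scope.

Section Duals.
Variables (R : realType) (X : normedModType R).

Definition is_dual (f : X -> R) : Prop :=
  (forall (a : R) (x y : X), f (a *: x + y) = a * f x + f y) /\ continuous f.

Definition dnorm (f : X -> R) : R :=
  sup [set `|f x| | x in [set x : X | `|x| <= 1]].

(* X^** : continuous (w.r.t. dnorm) linear functionals on X^*, represented as
   functions (X -> R) -> R; only their values on X^* matter. *)
Definition is_bidual (P : (X -> R) -> R) : Prop :=
  (forall (a : R) (f g : X -> R), is_dual f -> is_dual g ->
      P (fun x => a * f x + g x) = a * P f + P g) /\
  (forall f, is_dual f -> forall e : R, 0 < e -> exists2 d : R, 0 < d &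
      forall g, is_dual g -> dnorm (fun x => g x - f x) < d -> `|P g - P f| < e).

Definition ddnorm (P : (X -> R) -> R) : R :=
  sup [set `|P f| | f in [set f | is_dual f /\ dnorm f <= 1]].

Definition Jset (f : X -> R) : set ((X -> R) -> R) :=
  [set P | is_bidual P /\ ddnorm P = 1 /\ P f = dnorm f].

Definition diam_bidual (A : set ((X -> R) -> R)) : \bar R :=
  ereal_sup [set r | exists P Q, [/\ A P, A Q & r = (ddnorm (fun f => P f - Q f))%:E]].

Definition eps_smooth (eps : R) (f : X -> R) : Prop :=
  (diam_bidual (Jset f) <= eps%:E)%E.

Definition diam (A : set X) : \bar R :=
  ereal_sup [set r | exists x y, [/\ A x, A y & r = (`|x - y|)%:E]].

Definition Mplus (f : X -> R) : set X := [set x | `|x| = 1 /\ f x = dnorm f].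

Definition reflexive_space : Prop :=
  forall P, is_bidual P -> exists x : X, forall f, is_dual f -> P f = f x.

End Duals.

From HB Require Import structures.
From mathcomp Require Import all_boot all_order all_algebra.
From mathcomp Require Import all_classical all_reals all_analysis.
From mathcomp Require Import ring lra.
Set Implicit Arguments. Unset Strict Implicit. Unset Printing Implicit Defensive.
Import Order.TTheory GRing.Theory Num.Theory.
Import numFieldNormedType.Exports.
Local Open Scope classical_set_scope.
Local Open Scope ring_scope.

(* Under reflexivity every Phi in J(f) is evaluation at some x, and that x lies
   in M_f^+; conversely evaluation at a point of M_f^+ lies in J(f). By
   Hahn-Banach, evaluation X -> X^** is an isometry, so J(f) is an isometric
   copy of M_f^+ and the two diameters coincide. Hahn-Banach, in the form of a norm-one
   functional attaining the norm at a given point, is obtained by Zorn's lemma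
   on graphs of partial linear functionals dominated by the norm. *)

Section BidualEmbedding.
Variables (R : realType) (X : normedModType R).

Definition linear_functional (f : X -> R) :=
  forall (a : R) (x y : X), f (a *: x + y) = a * f x + f y.

Definition dominated_graph (G : set (X * R)) :=
  (forall a x r y s, G (x, r) -> G (y, s) -> G (a *: x + y, a * r + s)) /\
  (forall x r, G (x, r) -> r <= `|x|).

Lemma dominated_graph00 G x r : dominated_graph G -> G (x, r) -> G (0, 0).
Proof.
move=> [lin _] Gxr; have := lin (-1) x r x r Gxr Gxr.
by rewrite scaleN1r mulN1r !addNr.
Qed.

Lemma dominated_graphZ G a x r :
  dominated_graph G -> G (x, r) -> G (a *: x, a * r).
Proof.
move=> domG Gxr; have := domG.1 a x r 0 0 Gxr (dominated_graph00 domG Gxr).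
by rewrite !addr0.
Qed.

Lemma dominated_graph_functional G x r s :
  dominated_graph G -> G (x, r) -> G (x, s) -> r = s.
Proof.
move=> [lin dom] Gr Gs.
have := dom _ _ (lin (-1) x r x s Gr Gs); have := dom _ _ (lin (-1) x s x r Gs Gr).
rewrite scaleN1r addNr normr0 !mulN1r; lra.
Qed.

Lemma dominated_graph_directed U :
  (forall p q, U p -> U q ->
     exists2 K, dominated_graph K /\ K `<=` U & K p /\ K q) ->
  dominated_graph U.
Proof.
move=> directed; split.
- move=> a x r y s Up Uq; have [K [[lin _] KU] [Kp Kq]] := directed _ _ Up Uq.
  exact/KU/lin.
- by move=> x r Up; have [K [[_ dom] _] [Kp _]] := directed _ _ Up Up; apply: dom.
Qed.

Lemma dominated_chain_union (L : set (X * R)) (F : set (set (X * R))) :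
  dominated_graph L -> F `<=` [set G | dominated_graph (G `|` L)] ->
  total_on F subset -> dominated_graph (\bigcup_(G in F) G `|` L).
Proof.
move=> domL domF totF; apply: dominated_graph_directed.
pose F' := F `|` [set set0].
have F'_dom G : F' G ->
    dominated_graph (G `|` L) /\ G `|` L `<=` \bigcup_(G in F) G `|` L.
  case=> [FG|->]; split.
  - exact: domF.
  - by move=> p [Gp|Lp]; [left; exists G|right].
  - by rewrite set0U.
  - by rewrite set0U => p Lp; right.
have F'_cover p : (\bigcup_(G in F) G `|` L) p -> exists2 G, F' G & (G `|` L) p.
  by case=> [[G FG Gp]|Lp]; [exists G; left | exists set0; [right|right]].
have F'_total : total_on F' subset.
  move=> A B [FA|->] [FB|->]; [exact: totF|right|left|left]; exact: sub0set.
move=> p q /F'_cover[G1 F'G1 G1p] /F'_cover[G2 F'G2 G2q].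
have [G12|G21] := F'_total _ _ F'G1 F'G2.
- by exists (G2 `|` L); [exact: F'_dom | split=> //; apply: setSU G12 _ G1p].
- by exists (G1 `|` L); [exact: F'_dom | split=> //; apply: setSU G21 _ G2q].
Qed.

Definition graph_extension (H : set (X * R)) (w : X) (c : R) : set (X * R) :=
  [set (p.1 + t *: w, p.2 + t * c) | p in H & t in [set: R]].

(* The one-step extension of Hahn-Banach: c is squeezed between
   sup (r - |x - w|) and inf (|y + w| - s) over the graph. *)
Lemma dominated_graph_extension H w :
  dominated_graph H -> H (0, 0) -> exists c, dominated_graph (graph_extension H w c).
Proof.
move=> domH H00; have [lin dom] := domH.
pose L := [set p.2 - `|p.1 - w| | p in H].
have L_mem x r : H (x, r) -> L (r - `|x - w|) by move=> Hxr; exists (x, r).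
have L_ub y s : H (y, s) -> ubound L (`|y + w| - s).
  move=> Hys _ [[x r] Hxr <-] /=.
  have := dom _ _ (lin 1 x r y s Hxr Hys); rewrite scale1r mul1r.
  have := ler_normD (x - w) (y + w); rewrite addrACA addNr addr0; lra.
have L_ne : L !=set0 := ex_intro _ _ (L_mem _ _ H00).
clearbody L.
have c_bound y s : H (y, s) -> `|s + sup L| <= `|y + w|.
  move=> Hys; rewrite ler_norml; apply/andP; split; last first.
    by have := ge_sup L_ne (L_ub _ _ Hys); lra.
  have H_neg := dominated_graphZ (-1) domH Hys.
  have := ub_le_sup (ex_intro _ _ (L_ub _ _ H00)) (L_mem _ _ H_neg).
  by rewrite scaleN1r mulN1r -(opprD y w) normrN; lra.
exists (sup L); split.
- move=> a _ _ _ _ [[x r] Hxr [t _ [<- <-]]] [[y s] Hys [u _ [<- <-]]] /=.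
  exists (a *: x + y, a * r + s); first exact: lin.
  exists (a * t + u) => //=; congr pair.
    by rewrite scalerDr scalerDl scalerA addrACA.
  by rewrite mulrDr mulrDl mulrA addrACA.
- move=> _ _ [[x r] Hxr [t _ [<- <-]]] /=.
  have [->|t0] := eqVneq t 0; first by rewrite scale0r mul0r !addr0; exact: dom.
  have -> : x + t *: w = t *: (t^-1 *: x + w).
    by rewrite scalerDr scalerA divff // scale1r.
  have -> : r + t * sup L = t * (t^-1 * r + sup L).
    by rewrite mulrDr mulrA divff // mul1r.
  apply: le_trans (ler_norm _) _; rewrite normrM normrZ ler_wpM2l //.
  by apply: c_bound; apply: dominated_graphZ domH Hxr.
Qed.

Definition norm_line (z : X) : set (X * R) := range (fun a : R => (a *: z, a * `|z|)).

Lemma dominated_norm_line z : dominated_graph (norm_line z).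
Proof.
split=> [a x r y s [b _ [<- <-]] [c _ [<- <-]]|x r [b _ [<- <-]]].
- by exists (a * b + c) => //; rewrite scalerDl scalerA mulrDl mulrA.
- by rewrite normrZ ler_wpM2r // ler_norm.
Qed.

Lemma norming_functional z : exists2 g : X -> R,
  linear_functional g /\ (forall x, `|g x| <= `|x|) & g z = `|z|.
Proof.
have domL := dominated_norm_line z.
have [A [domH Amax]] := Zorn_bigcup (fun F => dominated_chain_union (F := F) domL).
set H := A `|` norm_line z in domH.
have H00 : H (0, 0) by right; exists 0 => //; rewrite scale0r mul0r.
have H_total w : exists r, H (w, r).
  apply: contrapT => Hw; have [c domE] := dominated_graph_extension w domH H00.
  have HE : H `<=` graph_extension H w c.
    move=> [x r] Hxr; exists (x, r) => //; exists 0 => //.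
    by rewrite scale0r mul0r !addr0.
  apply: (Amax (graph_extension H w c)); last first.
    by rewrite /= (setUidl (subset_trans (@subsetUr _ A _) HE)).
  split; first exact: subset_trans (@subsetUl _ A _) HE.
  move=> EA; apply: Hw; exists c; left; apply: EA.
  by exists (0, 0) => //; exists 1 => //; rewrite scale1r mul1r !add0r.
pose g w := xget 0 [set r | H (w, r)].
have gH w : H (w, g w) := xgetPex 0 (H_total w).
have [linH normH] := domH.
exists g; first split.
- move=> a x y; apply: dominated_graph_functional domH (gH _) _.
  exact: linH _ _ _ _ _ (gH x) (gH y).
- move=> x; rewrite ler_norml (normH _ _ (gH x)) andbT lerNl -normrN.
  by apply: normH; have := dominated_graphZ (-1) domH (gH x); rewrite scaleN1r mulN1r.
- apply: dominated_graph_functional domH (gH z) _.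
  by right; exists 1; rewrite ?scale1r ?mul1r.
Qed.

Lemma linear_functional0 (f : X -> R) : linear_functional f -> f 0 = 0.
Proof. by move=> linf; have := linf 1 0 0; rewrite scale1r addr0 mul1r; lra. Qed.

Lemma linear_functionalZ (f : X -> R) a x : linear_functional f -> f (a *: x) = a * f x.
Proof. by move=> linf; rewrite -[a *: x]addr0 linf linear_functional0 // addr0. Qed.

Lemma linear_functionalB (f : X -> R) x y : linear_functional f -> f (x - y) = f x - f y.
Proof. by move=> linf; rewrite addrC -scaleN1r linf mulN1r addrC. Qed.

Lemma dual_sub (f g : X -> R) : is_dual f -> is_dual g -> is_dual (fun x => f x - g x).
Proof.
move=> [linf cf] [ling cg]; split=> [a x y|x]; first by rewrite linf ling; ring.
exact: continuousB (cf x) (cg x).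
Qed.

Lemma dual0 : is_dual (fun _ : X => 0).
Proof. by split=> [*|]; [rewrite mulr0 addr0 | exact: cst_continuous]. Qed.

Lemma dual_bounded (f : X -> R) : is_dual f -> exists M, forall x, `|f x| <= M * `|x|.
Proof.
move=> [linf cf].
have [d /= d0 small] := nbhs_norm0P.1 (cvgr_dist_lt _ _ (cf 0) _ ltr01).
exists (2 / d) => x; have [->|x0] := eqVneq x 0.
  by rewrite linear_functional0 // !normr0 mulr0.
have nx0 : 0 < `|x| by rewrite normr_gt0.
have d2 : d / 2 < d by lra.
pose k := d / 2 / `|x|; have k0 : 0 < k by rewrite !divr_gt0.
have kx : `|k *: x| = d / 2 by rewrite normrZ gtr0_norm // divfK ?gt_eqF.
have := small (k *: x); rewrite /= kx linear_functional0 // sub0r normrN.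
rewrite linear_functionalZ // normrM gtr0_norm // => /(_ d2).
rewrite -ltr_pdivlMl // mulr1 => /ltW; congr (_ <= _).
by rewrite /k !invf_div mulrC.
Qed.

Lemma dnorm_ub (f : X -> R) x : is_dual f -> `|f x| <= dnorm f * `|x|.
Proof.
move=> duf; have [linf _] := duf; have [M boundM] := dual_bounded duf.
have bnd : has_ubound [set `|f y| | y in [set y : X | `|y| <= 1]].
  exists `|M| => _ [y y1 <-]; apply: le_trans (boundM y) _.
  by apply: le_trans (ler_wpM2r (normr_ge0 _) (ler_norm M)) _; rewrite ler_piMr.
have [->|x0] := eqVneq x 0; first by rewrite linear_functional0 // !normr0 mulr0.
have nx0 : 0 < `|x| by rewrite normr_gt0.
have unit_x : `| `|x|^-1 *: x| <= 1 by rewrite normrZ normfV normr_id mulVf ?gt_eqF.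
have := ub_le_sup bnd (ex_intro2 _ _ (`|x|^-1 *: x) unit_x erefl).
by rewrite linear_functionalZ // normrM normfV normr_id mulrC ler_pdivrMr.
Qed.

Lemma dnorm_le_bound (f : X -> R) M :
  0 <= M -> (forall x, `|f x| <= M * `|x|) -> dnorm f <= M.
Proof.
move=> M0 boundM; apply: ge_sup; first by exists `|f 0|, 0 => //=; rewrite normr0.
by move=> _ [x x1 <-]; apply: le_trans (boundM x) _; rewrite ler_piMr.
Qed.

Lemma contraction_continuous (g : X -> R) :
  linear_functional g -> (forall x, `|g x| <= `|x|) -> continuous g.
Proof.
move=> ling gle x; apply/cvgrPdist_lt => e e0.
near=> y; rewrite -linear_functionalB //; apply: le_lt_trans (gle _) _.
near: y; exact: cvgr_dist_lt.
Unshelve. all: by end_near.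
Qed.

Lemma norming_dual z : exists2 g : X -> R, is_dual g /\ dnorm g <= 1 & g z = `|z|.
Proof.
have [g [ling gle] gz] := norming_functional z.
exists g => //; split; first by split=> //; exact: contraction_continuous.
by apply: dnorm_le_bound => // x; rewrite mul1r.
Qed.

Definition eval_at (x : X) (g : X -> R) : R := g x.

Lemma eval_at_bidual x : is_bidual (eval_at x).
Proof.
split=> // f duf e e0; exists (e / (`|x| + 1)); first by rewrite divr_gt0 // ltr_wpDl.
move=> g dug gf_lt; rewrite /eval_at -[g x - f x]/((fun y => g y - f y) x).
apply: le_lt_trans (dnorm_ub x (dual_sub dug duf)) _.
apply: le_lt_trans (ler_wpM2r (normr_ge0 x) (ltW gf_lt)) _.
by rewrite mulrAC ltr_pdivrMr ?ltr_wpDl // ltr_pM2l //; lra.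
Qed.

Lemma ddnorm_eq_norm (P : (X -> R) -> R) x :
  (forall g, is_dual g -> P g = g x) -> ddnorm P = `|x|.
Proof.
move=> Px.
have ub : ubound [set `|P g| | g in [set g | is_dual g /\ dnorm g <= 1]] `|x|.
  move=> _ [g [dug g1] <-]; rewrite Px //.
  by apply: le_trans (dnorm_ub x dug) _; rewrite ler_piMl.
apply/eqP; rewrite eq_le; apply/andP; split.
  apply: ge_sup ub; exists `|P (fun _ => 0)|, (fun _ => 0) => //.
  split; first exact: dual0.
  by apply: dnorm_le_bound => // y; rewrite normr0 mul1r.
have [g [dug g1] gx] := norming_dual x.
have <- : `|P g| = `|x| by rewrite Px // gx normr_id.
by rewrite /ddnorm; apply: ub_le_sup; [exists `|x| | exists g].
Qed.

Lemma ddnorm_sub_eq_norm (P Q : (X -> R) -> R) x y :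
  (forall g, is_dual g -> P g = g x) -> (forall g, is_dual g -> Q g = g y) ->
  ddnorm (fun g => P g - Q g) = `|x - y|.
Proof.
move=> Px Qy; apply: ddnorm_eq_norm => g dug.
by have [ling _] := dug; rewrite Px // Qy // linear_functionalB.
Qed.

Lemma Mplus_Jset (f : X -> R) x : Mplus f x -> Jset f (eval_at x).
Proof.
move=> [x1 fx]; split; first exact: eval_at_bidual.
by rewrite (@ddnorm_eq_norm _ x).
Qed.

Lemma Jset_Mplus (f : X -> R) P : reflexive_space X -> is_dual f -> Jset f P ->
  exists2 x, Mplus f x & forall g, is_dual g -> P g = g x.
Proof.
move=> refl duf [bidP [P1 Pf]]; have [x Px] := refl P bidP.
by exists x => //; split; [rewrite -(ddnorm_eq_norm Px) | rewrite -Px].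
Qed.

Lemma diam_bidual_Jset (f : X -> R) : reflexive_space X -> is_dual f ->
  diam_bidual (Jset f) = diam (Mplus f).
Proof.
move=> refl duf; congr ereal_sup; apply/seteqP; split=> r.
- move=> [P [Q [JP JQ ->]]].
  have [x Mx Px] := Jset_Mplus refl duf JP; have [y My Qy] := Jset_Mplus refl duf JQ.
  by exists x, y; rewrite (ddnorm_sub_eq_norm Px Qy).
- move=> [x [y [Mx My ->]]]; exists (eval_at x), (eval_at y).
  split; [exact: Mplus_Jset | exact: Mplus_Jset |].
  by rewrite (@ddnorm_sub_eq_norm _ _ x y).
Qed.

End BidualEmbedding.

Theorem lemma2p4 (R : realType) (X : completeNormedModType R) (eps : R)
  (heps0 : 0 <= eps) (heps2 : eps < 2) (hrefl : reflexive_space X)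
  (f : X -> R) (hf : is_dual f) (hf0 : f <> (fun _ => 0)) :
  eps_smooth eps f <-> (diam (Mplus f) <= eps%:E)%E.
Proof. by rewrite /eps_smooth diam_bidual_Jset. Qed.
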